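(* Given an episodic MDP and a general preference $M$, construct the two-player zero-sum Markov game consisting of two independent copies of the MDP, where player $i\in\{1,2\}$ controls the $i$-th copy, with payoff $r(\tau,\tau')=M[\tau,\tau']$ for the pair of trajectories $(\tau,\tau')$ of the two copies (player 1 maximizes, player 2 minimizes). If $(\mu^\star,\nu^\star)\in\Pi_1\times\Pi_2$ is a restricted Nash equilibrium of this game, i.e. $\mu^\star\in\arg\max_{\mu\in\Pi_1}\mathbb{E}_{\tau\sim\mu,\tau'\sim\nu^\star}[M[\tau,\tau']]$ and $\nu^\star\in\arg\min_{\nu\in\Pi_2}\mathbb{E}_{\tau\sim\mu^\star,\tau'\sim\nu}[M[\tau,\tau']]$, then both $\mu^\star$ and $\nu^\star$ are von Neumann winners of the original problem.
   Context: Episodic MDP $(H,\mathcal{S},\mathcal{A},\mathbb{P})$; trajectories $\tau\in(\mathcal{S}\times\mathcal{A})^H$; policies are general (may depend on the whole history, randomized). General preference: $M[\tau,\tau']=\Pr[\tau\succ\tau']\in[0,1]$, with $M[\tau,\tau']+M[\tau',\tau]=1$, so the game below is constant-sum. $\Pi_i$ is the set of policies of player $i$ that map the player's own partial trajectory $(s^{(i)}_1,a^{(i)}_1,\dots,s^{(i)}_h)$ in its copy to a distribution over actions; it coincides with the set of all general policies of the original MDP. A policy $\pi^\star$ is a von Neumann winner if $(\pi^\star,\pi^\star)$ is a symmetric Nash equilibrium of the constant-sum game $\max_\pi\min_{\pi'}\mathbb{E}_{\tau\sim\pi,\tau'\sim\pi'}M[\tau,\tau']$. *)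

From mathcomp Require Import all_boot all_order all_algebra.
Set Implicit Arguments. Unset Strict Implicit. Unset Printing Implicit Defensive.
Import Order.TTheory GRing.Theory Num.Theory.
Local Open Scope ring_scope.

Section MDP.
Variables (R : realFieldType) (S A : finType) (H : nat).

Definition traj := (H.-tuple (S * A))%type.

(* initial-state distribution and (time-inhomogeneous) transition kernel
   P h s a s' = Pr[s_{h+1} = s' | s_h = s, a_h = a]  (h counted from 0) *)
Definition is_dist (T : finType) (d : T -> R) :=
  (forall x, 0 <= d x) /\ \sum_(x : T) d x = 1.

Definition valid_mdp (p0 : S -> R) (P : nat -> S -> A -> S -> R) :=
  is_dist p0 /\ forall h s a, is_dist (P h s a).

(* A general policy: maps the partial trajectory (s_1,a_1,...,s_{h-1},a_{h-1})
   and the current state s_h to a distribution over actions. It may depend on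
   the whole history and is randomized. *)
Definition policy := seq (S * A) -> S -> A -> R.

Definition valid_policy (pi : policy) :=
  forall hist s, is_dist (pi hist s).

Fixpoint traj_prob_from (P : nat -> S -> A -> S -> R) (pi : policy)
  (hist : seq (S * A)) (x : S * A) (rest : seq (S * A)) {struct rest} : R :=
  pi hist x.1 x.2 *
  match rest with
  | [::] => 1
  | y :: rest' => P (size hist) x.1 x.2 y.1 *
                  traj_prob_from P pi (rcons hist x) y rest'
  end.

Definition traj_prob (p0 : S -> R) (P : nat -> S -> A -> S -> R) (pi : policy)
  (tau : seq (S * A)) : R :=
  match tau with
  | [::] => 1
  | x :: rest => p0 x.1 * traj_prob_from P pi [::] x rest
  end.

Definition pref_value (p0 : S -> R) (P : nat -> S -> A -> S -> R)
  (M : traj -> traj -> R) (pi pi' : policy) : R :=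
  \sum_(t : traj) \sum_(t' : traj)
     traj_prob p0 P pi t * traj_prob p0 P pi' t' * M t t'.

Definition general_preference (M : traj -> traj -> R) :=
  (forall t t', 0 <= M t t' <= 1) /\ (forall t t', M t t' + M t' t = 1).

Definition restricted_NE p0 P M (mu nu : policy) :=
  [/\ valid_policy mu, valid_policy nu,
      (forall mu', valid_policy mu' ->
         pref_value p0 P M mu' nu <= pref_value p0 P M mu nu) &
      (forall nu', valid_policy nu' ->
         pref_value p0 P M mu nu <= pref_value p0 P M mu nu')].

Definition von_neumann_winner p0 P M (pi : policy) := restricted_NE p0 P M pi pi.

End MDP.

(* Two independent copies of the MDP give a symmetric constant-sum game:
   V(pi, pi') + V(pi', pi) = 1 because M[t, t'] + M[t', t] = 1 and both
   trajectory distributions have total mass 1.  In such a game every policy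
   scores 1/2 against itself, so at a saddle point (mu, nu) the value
   V(mu, nu) is squeezed between V(nu, nu) = 1/2 and V(mu, mu) = 1/2; hence
   no deviation can do better than 1/2 against mu or against nu, which makes
   (mu, mu) and (nu, nu) saddle points as well. *)
From mathcomp Require Import all_boot all_order all_algebra.
From mathcomp Require Import lra.
Set Implicit Arguments. Unset Strict Implicit. Unset Printing Implicit Defensive.
Import Order.TTheory GRing.Theory Num.Theory.
Local Open Scope ring_scope.

Lemma big_tuple0 (V : nmodType) (T : finType) (f : seq T -> V) :
  \sum_(t : 0.-tuple T) f t = f [::].
Proof. by rewrite (big_pred1 [tuple]) // => t; apply/eqP; rewrite [t]tuple0. Qed.

Lemma big_tuple_cons (V : nmodType) (T : finType) n (f : seq T -> V) :
  \sum_(t : n.+1.-tuple T) f t = \sum_(x : T) \sum_(t : n.-tuple T) f (x :: t).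
Proof.
rewrite pair_bigA (reindex (fun p : T * n.-tuple T => [tuple of p.1 :: p.2])) //.
exists (fun t : n.+1.-tuple T => (thead t, [tuple of behead t])) => [[x t] _|t _].
  by congr (_, _); apply: val_inj.
by apply: val_inj; rewrite /= [in RHS](tuple_eta t).
Qed.

Section TrajectoryDistribution.
Variables (R : realFieldType) (S A : finType) (P : nat -> S -> A -> S -> R).
Hypothesis P_dist : forall h s a, is_dist (P h s a).
Variable pi : policy R S A.
Hypothesis pi_valid : valid_policy pi.

Lemma sum_traj_prob_from n hist s :
  \sum_(a : A) \sum_(t : n.-tuple (S * A)) traj_prob_from P pi hist (s, a) t = 1.
Proof.
elim: n hist s => [|n IHn] hist s.
  under eq_bigr => a _ do rewrite big_tuple0 /= mulr1.
  exact: (pi_valid hist s).2.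
rewrite -[RHS](pi_valid hist s).2; apply: eq_bigr => a _.
have first_step : \sum_(t : n.+1.-tuple (S * A)) traj_prob_from P pi hist (s, a) t
    = pi hist s a * \sum_(s' : S) P (size hist) s a s' *
        \sum_(a' : A) \sum_(t : n.-tuple (S * A))
          traj_prob_from P pi (rcons hist (s, a)) (s', a') t.
  rewrite big_tuple_cons big_distrr /=.
  under [RHS]eq_bigr => s' _ do rewrite mulrA big_distrr /=.
  rewrite [RHS]pair_bigA /=; apply: eq_bigr => -[s' a'] _.
  by rewrite big_distrr; apply: eq_bigr => t _; rewrite /= mulrA.
rewrite first_step.
under eq_bigr => s' _ do rewrite IHn mulr1.
by rewrite (P_dist _ _ _).2 mulr1.
Qed.

Lemma sum_traj_prob (H : nat) (p0 : S -> R) :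
  is_dist p0 -> \sum_(t : traj S A H) traj_prob p0 P pi t = 1.
Proof.
move=> p0_dist; rewrite /traj; case: H => [|n]; first by rewrite big_tuple0.
rewrite big_tuple_cons.
transitivity (\sum_(s : S) p0 s * \sum_(a : A) \sum_(t : n.-tuple (S * A))
                traj_prob_from P pi [::] (s, a) t).
  under [RHS]eq_bigr => s _ do rewrite big_distrr /=.
  by rewrite [RHS]pair_bigA; apply: eq_bigr => -[s a] _; rewrite big_distrr.
by under eq_bigr => s _ do rewrite sum_traj_prob_from mulr1; exact: p0_dist.2.
Qed.

End TrajectoryDistribution.

Lemma pref_value_antisym (R : realFieldType) (S A : finType) (H : nat)
    (p0 : S -> R) (P : nat -> S -> A -> S -> R)
    (M : traj S A H -> traj S A H -> R) (pi pi' : policy R S A) :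
  valid_mdp p0 P -> (forall t t', M t t' + M t' t = 1) ->
  valid_policy pi -> valid_policy pi' ->
  pref_value p0 P M pi pi' + pref_value p0 P M pi' pi = 1.
Proof.
move=> [p0_dist P_dist] M_antisym pi_valid pi'_valid.
rewrite /pref_value [X in _ + X]exchange_big -big_split /=.
transitivity (\sum_(t : traj S A H) \sum_(t' : traj S A H)
                traj_prob p0 P pi t * traj_prob p0 P pi' t').
  apply: eq_bigr => t _; rewrite -big_split; apply: eq_bigr => t' _ /=.
  by rewrite [traj_prob p0 P pi' t' * _]mulrC -mulrDr M_antisym mulr1.
under eq_bigr => t _ do rewrite -big_distrr /= sum_traj_prob // mulr1.
exact: sum_traj_prob.
Qed.

Section SymmetricConstantSumGame.
Variables (R : realFieldType) (T : Type) (admissible : T -> Prop) (V : T -> T -> R).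
Hypothesis V_antisym : forall x y, admissible x -> admissible y -> V x y + V y x = 1.

Definition saddle_point x y :=
  [/\ admissible x, admissible y,
      forall x', admissible x' -> V x' y <= V x y &
      forall y', admissible y' -> V x y <= V x y'].

Lemma self_play_value x : admissible x -> V x x = 1 / 2.
Proof. by move=> x_adm; have := V_antisym x_adm x_adm; lra. Qed.

Lemma saddle_point_value x y : saddle_point x y -> V x y = 1 / 2.
Proof.
move=> [x_adm y_adm x_best y_best].
have := x_best _ y_adm; have := y_best _ x_adm.
by rewrite !self_play_value //; lra.
Qed.

Lemma saddle_point_diag_l x y : saddle_point x y -> saddle_point x x.
Proof.
move=> xy_saddle; have xy_value := saddle_point_value xy_saddle.
case: xy_saddle => x_adm y_adm _ y_best; rewrite /saddle_point self_play_value //.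
split=> // z z_adm; have := y_best _ z_adm.
  by have := V_antisym x_adm z_adm; lra.
by lra.
Qed.

Lemma saddle_point_diag_r x y : saddle_point x y -> saddle_point y y.
Proof.
move=> xy_saddle; have xy_value := saddle_point_value xy_saddle.
case: xy_saddle => x_adm y_adm x_best _; rewrite /saddle_point self_play_value //.
split=> // z z_adm; have := x_best _ z_adm.
  by lra.
by have := V_antisym y_adm z_adm; lra.
Qed.

End SymmetricConstantSumGame.

Theorem proposition4 (R : realFieldType) (S A : finType) (H : nat)
  (p0 : S -> R) (P : nat -> S -> A -> S -> R) (M : traj S A H -> traj S A H -> R)
  (mu nu : policy R S A) :
  valid_mdp p0 P -> general_preference M ->
  restricted_NE p0 P M mu nu ->
  von_neumann_winner p0 P M mu /\ von_neumann_winner p0 P M nu.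
Proof.
move=> mdp [_ M_antisym] mu_nu_NE.
have V_antisym : forall pi pi', valid_policy pi -> valid_policy pi' ->
    pref_value p0 P M pi pi' + pref_value p0 P M pi' pi = 1.
  by move=> pi pi'; apply: pref_value_antisym.
split; [exact: (saddle_point_diag_l V_antisym mu_nu_NE)
       | exact: (saddle_point_diag_r V_antisym mu_nu_NE)].
Qed.
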